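(* Let $n,m_A,m_B>0$ be integers, $A,B$ quantum systems of dimensions $m_A,m_B$, and $\psi_{AB}$ a bipartite state with $\psi_A=\mathrm{id}_{m_A}/m_A$ and $\psi_B=\mathrm{id}_{m_B}/m_B$; let $\rho=\rho(\psi_{AB})$ and let $\mathcal{T}:\mathcal{M}(B^n)\to\mathcal{M}(A^n)$ be the Markov super-operator with respect to $\psi_{AB}^{\otimes n}$. Then for every $Q\in\mathcal{M}(B^n)$ and $S\subseteq[n]$, $$\|\mathcal{T}(Q[S])\|'_2\le\rho^{|S|}\|Q[S]\|'_2.$$
   Context: On $\mathcal{M}(A^n)$ use $\langle X,Y\rangle=\frac1{m_A^n}\mathrm{Tr}X^\dagger Y$ and on $\mathcal{M}(B^n)$ use $\frac1{m_B^n}\mathrm{Tr}X^\dagger Y$; $\|X\|'_2=\langle X,X\rangle^{1/2}$. The Markov super-operator is defined by $\mathrm{Tr}((M^\dagger\otimes Q)\psi_{AB}^{\otimes n})=\langle M,\mathcal{T}(Q)\rangle$ for all $M,Q$. Maximal correlation: $\rho(\psi_{AB})=\sup\{|\mathrm{Tr}((P^\dagger\otimes Q)\psi_{AB})|:\mathrm{Tr}P=\mathrm{Tr}Q=0,\ \tfrac1{m_A}\mathrm{Tr}P^\dagger P=\tfrac1{m_B}\mathrm{Tr}Q^\dagger Q=1\}$. A standard orthonormal basis of $\mathcal{M}_k$ is an orthonormal basis (for $\frac1k\mathrm{Tr}X^\dagger Y$) of Hermitian matrices $\mathcal{B}_0=\mathrm{id}_k,\mathcal{B}_1,\ldots,\mathcal{B}_{k^2-1}$;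 with $\mathcal{B}_\sigma=\bigotimes_i\mathcal{B}_{\sigma_i}$ and $Q=\sum_\sigma\widehat Q(\sigma)\mathcal{B}_\sigma$, the Efron–Stein component is $Q[S]=\sum_{\sigma:\{i:\sigma_i\ne0\}=S}\widehat Q(\sigma)\mathcal{B}_\sigma$ (basis-independent). *)

From HB Require Import structures.
From mathcomp Require Import all_boot all_order all_algebra.
From mathcomp Require Import classical_sets reals.
From mathcomp.real_closed Require Import complex.
Set Implicit Arguments. Unset Strict Implicit. Unset Printing Implicit Defensive.
Import Order.TTheory GRing.Theory Num.Theory.
Local Open Scope ring_scope.

Section Defs.
Variable R : realType.
Local Notation C := R[i].

(* Linear operators (matrices) on the Hilbert space C^I, I a finite index set
   (computational basis). *)
Definition op (I : finType) := I -> I -> C.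

Definition trace (I : finType) (X : op I) : C := \sum_(i : I) X i i.
Definition mulop (I : finType) (X Y : op I) : op I :=
  fun i j => \sum_(k : I) X i k * Y k j.
Definition adj (I : finType) (X : op I) : op I := fun i j => (X j i)^*.
Definition idop (I : finType) : op I := fun i j => (i == j)%:R.
Definition herm (I : finType) (X : op I) : Prop := forall i j, X j i = (X i j)^*.

Definition tens (I J : finType) (X : op I) (Y : op J) : op (I * J)%type :=
  fun x y => X x.1 y.1 * Y x.2 y.2.

Definition innerN (I : finType) (X Y : op I) : C :=
  (#|I|%:R)^-1 * trace (mulop (adj X) Y).
Definition norm2 (I : finType) (X : op I) : R :=
  Num.sqrt (complex.Re (innerN X X)).

Definition psd (I : finType) (X : op I) : Prop :=
  forall v : I -> C, 0 <= \sum_(i : I) \sum_(j : I) (v i)^* * X i j * v j.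
Definition density (I : finType) (X : op I) : Prop :=
  [/\ herm X, psd X & trace X = 1].

Definition marginalA (mA mB : nat) (psi : op ('I_mA * 'I_mB)%type) : op 'I_mA :=
  fun a a' => \sum_(b : 'I_mB) psi (a, b) (a', b).
Definition marginalB (mA mB : nat) (psi : op ('I_mA * 'I_mB)%type) : op 'I_mB :=
  fun b b' => \sum_(a : 'I_mA) psi (a, b) (a, b').

(* Multi-indices for n copies of an m-dimensional system: C^(m^n). *)
Definition idx (n m : nat) := {ffun 'I_n -> 'I_m}.

(* psi_AB^{(x) n}, as an operator on A^n B^n (systems reordered as A^n B^n). *)
Definition tenspow (n mA mB : nat) (psi : op ('I_mA * 'I_mB)%type)
  : op (idx n mA * idx n mB)%type :=
  fun x y => \prod_(i < n) psi (x.1 i, x.2 i) (y.1 i, y.2 i).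

Definition markov_op (n mA mB : nat) (psi : op ('I_mA * 'I_mB)%type)
  (T : op (idx n mB) -> op (idx n mA)) : Prop :=
  forall (M : op (idx n mA)) (Q : op (idx n mB)),
    trace (mulop (tens (adj M) Q) (@tenspow n mA mB psi)) = innerN M (T Q).

Definition corr_values (mA mB : nat) (psi : op ('I_mA * 'I_mB)%type) : set R :=
  [set r : R | exists (P : op 'I_mA) (Q : op 'I_mB),
     [/\ trace P = 0, trace Q = 0, innerN P P = 1, innerN Q Q = 1 &
         r = complex.Re `| trace (mulop (tens (adj P) Q) psi) | ] ].
Definition maxcorr (mA mB : nat) (psi : op ('I_mA * 'I_mB)%type) : R :=
  sup (corr_values psi).

Definition std_basis (k : nat) (Bs : 'I_(k * k) -> op 'I_k) : Prop :=
  [/\ forall s : 'I_(k * k), val s = 0%N -> Bs s = @idop 'I_k,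
      forall s, herm (Bs s) &
      forall s t, innerN (Bs s) (Bs t) = (s == t)%:R].

Definition basis_tens (n k : nat) (Bs : 'I_(k * k) -> op 'I_k)
  (sigma : {ffun 'I_n -> 'I_(k * k)}) : op (idx n k) :=
  fun x y => \prod_(i < n) Bs (sigma i) (x i) (y i).

Definition es_comp (n k : nat) (Bs : 'I_(k * k) -> op 'I_k)
  (Q : op (idx n k)) (S : {set 'I_n}) : op (idx n k) :=
  fun x y => \sum_(sigma : {ffun 'I_n -> 'I_(k * k)} |
                   [set i | val (sigma i) != 0%N] == S)
               innerN (basis_tens Bs sigma) Q * basis_tens Bs sigma x y.

End Defs.

(* The Markov operator of psi^{(x)n} is the n-fold tensor power of
   the one-site map t determined by <P, t V> = Tr((P^dagger (x) V) psi), and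
   t(id) = id. Expanding Q[S] in the product basis B_sigma (supp sigma = S),
   ||T(Q[S])||^2 becomes a quadratic form <c, K c> in the coefficients c, where
   K is a tensor product of one-site kernels: off S it is the Gram entry
   <t(id), t(id)> = 1, on S it is the Gram matrix of t on traceless operators.
   The latter has norm at most rho^4, because maximal correlation, read
   homogeneously, says ||t V|| <= rho ||V|| for traceless V. Norms of kernels
   multiply under tensor products, so ||K c|| <= rho^(2|S|) ||c|| and
   Cauchy-Schwarz gives ||T(Q[S])||^2 <= rho^(2|S|) ||Q[S]||^2. *)

From HB Require Import structures.
From mathcomp Require Import all_boot all_order all_algebra.
From mathcomp Require Import classical_sets reals.
From mathcomp.real_closed Require Import complex.
From mathcomp Require Import ring lra.
Import Order.TTheory GRing.Theory Num.Theory.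
Set Implicit Arguments. Unset Strict Implicit. Unset Printing Implicit Defensive.
Local Open Scope ring_scope.

Lemma sum_delta_l (C : pzSemiRingType) (I : finType) (j : I) (F : I -> C) :
  \sum_i (i == j)%:R * F i = F j.
Proof.
by rewrite (bigD1 j) //= eqxx mul1r big1 ?addr0 // => i /negbTE ->; rewrite mul0r.
Qed.

Lemma sum_delta_r (C : pzSemiRingType) (I : finType) (j : I) (F : I -> C) :
  \sum_i F i * (i == j)%:R = F j.
Proof.
by rewrite (bigD1 j) //= eqxx mulr1 big1 ?addr0 // => i /negbTE ->; rewrite mulr0.
Qed.

Lemma le_of_mul_le_mul (F : numDomainType) (x c : F) :
  0 <= x -> 0 <= c -> x * x <= x * c -> x <= c.
Proof.
move=> x0 c0; have [->|xn0] := eqVneq x 0; first by [].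
by rewrite ler_pM2l // lt_def xn0.
Qed.

Lemma sum_pair (V : nmodType) (I J : finType) (F : I * J -> V) :
  \sum_p F p = \sum_i \sum_j F (i, j).
Proof. by rewrite pair_big; apply: eq_bigr => -[]. Qed.

Section FiniteSums.
Variable C : numClosedFieldType.

Lemma cauchy_schwarz_sum (I : finType) (a b : I -> C) :
  `|\sum_i (a i)^* * b i| ^+ 2 <= (\sum_i `|a i| ^+ 2) * (\sum_i `|b i| ^+ 2).
Proof.
rewrite normCK !(eq_bigr _ (fun i _ => normCK _)).
set z := \sum_i _; set A := \sum_i a i * _; set B := \sum_i b i * _.
have B0 : 0 <= B by apply: sumr_ge0 => i _; exact: mul_conjC_ge0.
have [Bz|Bnz] := eqVneq B 0.
  have bz i : b i = 0.
    apply/eqP; rewrite -mul_conjC_eq0; apply/eqP.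
    by apply: (psumr_eq0P _ Bz) => // j _; exact: mul_conjC_ge0.
  by rewrite /z big1 ?mul0r ?Bz ?mulr0 // => i _; rewrite bz mulr0.
have BJ : B^* = B by rewrite geC0_conj.
have zJ : z^* = \sum_i a i * (b i)^*.
  by rewrite rmorph_sum; apply: eq_bigr => i _; rewrite rmorphM /= conjCK mulrC.
(* expand [0 <= \sum_i |B a_i - z^* b_i|^2] *)
have : 0 <= \sum_i (B * a i - z^* * b i) * (B * a i - z^* * b i)^*.
  by apply: sumr_ge0 => i _; exact: mul_conjC_ge0.
have -> : \sum_i (B * a i - z^* * b i) * (B * a i - z^* * b i)^* =
          B * (B * A - z * z^*).
  transitivity (\sum_i (B * B * (a i * (a i)^*) - B * z * (a i * (b i)^*)
        - B * z^* * ((a i)^* * b i) + z * z^* * (b i * (b i)^*))).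
    by apply: eq_bigr => i _; rewrite rmorphB !rmorphM /= BJ conjCK; ring.
  by rewrite !big_split /= !sumrN -!mulr_sumr -zJ -/A -/B -/z; ring.
have Bpos : 0 < B by rewrite lt_def Bnz B0.
by rewrite pmulr_rge0 // subr_ge0 [A * B]mulrC.
Qed.

Lemma sum_conjM_le (I : finType) (a b : I -> C) (L : C) :
  0 <= L -> 0 <= \sum_i (a i)^* * b i ->
  \sum_i `|b i| ^+ 2 <= L ^+ 2 * \sum_i `|a i| ^+ 2 ->
  \sum_i (a i)^* * b i <= L * \sum_i `|a i| ^+ 2.
Proof.
set q := \sum_i _; set A := \sum_i `|a i| ^+ 2 => L0 q0 hb.
have A0 : 0 <= A by apply: sumr_ge0 => i _; exact: exprn_ge0.
rewrite -(ler_sqr (x:=q)) ?nnegrE ?mulr_ge0 //.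
rewrite -{1}(ger0_norm q0); apply: le_trans (cauchy_schwarz_sum a b) _.
by rewrite -/A [(L * A) ^+ 2]exprMn [A ^+ 2]expr2 mulrCA ler_wpM2l.
Qed.

Definition fcons (I : finType) n (s : I) (g : {ffun 'I_n -> I}) : {ffun 'I_n.+1 -> I} :=
  [ffun i => if unlift ord0 i is Some j then g j else s].

Lemma fcons0 (I : finType) n s (g : {ffun 'I_n -> I}) : fcons s g ord0 = s.
Proof. by rewrite ffunE unlift_none. Qed.

Lemma fconsS (I : finType) n s (g : {ffun 'I_n -> I}) j :
  fcons s g (lift ord0 j) = g j.
Proof. by rewrite ffunE liftK. Qed.

Lemma sum_ffunS (V : nmodType) (I : finType) n (F : {ffun 'I_n.+1 -> I} -> V) :
  \sum_f F f = \sum_(s : I) \sum_(g : {ffun 'I_n -> I}) F (fcons s g).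
Proof.
rewrite pair_big /= (reindex (fun p : I * {ffun 'I_n -> I} => fcons p.1 p.2)) //=.
exists (fun f => (f ord0, [ffun j => f (lift ord0 j)])) => [[s g] _|f _] /=.
  by rewrite fcons0; congr pair; apply/ffunP => j; rewrite ffunE fconsS.
by apply/ffunP => i; rewrite ffunE; case: unliftP => [j ->|->]; rewrite ?ffunE.
Qed.

Lemma tensor_kernel_norm_le (I : finType) n
    (K : 'I_n -> I -> I -> C) (lam : 'I_n -> C) :
  (forall i, 0 <= lam i) ->
  (forall i (v : I -> C),
     \sum_s `|\sum_s' K i s s' * v s'| ^+ 2 <= lam i * \sum_s `|v s| ^+ 2) ->
  forall c : {ffun 'I_n -> I} -> C,
  \sum_(sg : {ffun 'I_n -> I})
     `|\sum_(tau : {ffun 'I_n -> I}) (\prod_i K i (sg i) (tau i)) * c tau| ^+ 2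
    <= (\prod_i lam i) * \sum_(sg : {ffun 'I_n -> I}) `|c sg| ^+ 2.
Proof.
elim: n K lam => [|n IH] K lam lam0 hK c.
  have ffun0_eq (f g : {ffun 'I_0 -> I}) : f = g by apply/ffunP => -[].
  rewrite big_ord0 mul1r le_eqVlt; apply/orP; left; apply/eqP.
  apply: eq_bigr => sg _; rewrite (bigD1 sg) //= big_ord0 mul1r big1 ?addr0 //.
  by move=> tau; rewrite (ffun0_eq tau sg) eqxx.
pose K' i := K (lift ord0 i); pose lam' i := lam (lift ord0 i).
(* contract the last n sites first, then apply the kernel of site 0 *)
pose d t (g : {ffun 'I_n -> I}) :=
  \sum_(h : {ffun 'I_n -> I}) (\prod_i K' i (g i) (h i)) * c (fcons t h).
have split_site0 s g :
    \sum_(tau : {ffun 'I_n.+1 -> I}) (\prod_i K i (fcons s g i) (tau i)) * c tau =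
    \sum_t K ord0 s t * d t g.
  rewrite sum_ffunS; apply: eq_bigr => t _; rewrite /d mulr_sumr.
  apply: eq_bigr => h _; rewrite big_ord_recl !fcons0 mulrA.
  by congr (_ * _ * _); apply: eq_bigr => i _; rewrite !fconsS.
rewrite sum_ffunS (eq_bigr (fun s => \sum_(g : {ffun 'I_n -> I})
  `|\sum_t K ord0 s t * d t g| ^+ 2)); last first.
  by move=> s _; apply: eq_bigr => g _; rewrite split_site0.
rewrite exchange_big /=.
apply: (@le_trans _ _ (\sum_(g : {ffun 'I_n -> I}) lam ord0 * \sum_t `|d t g| ^+ 2)).
  by apply: ler_sum => g _; apply: hK.
rewrite -mulr_sumr exchange_big /= big_ord_recl -mulrA ler_wpM2l //.
rewrite sum_ffunS mulr_sumr; apply: ler_sum => t _.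
exact: (IH K' lam' (fun i => lam0 _) (fun i => hK _) (fun h => c (fcons t h))).
Qed.

End FiniteSums.

Section Operators.
Variable R : realType.
Local Notation C := R[i].

Definition lincomb (I J : finType) (c : J -> C) (X : J -> op R I) : op R I :=
  fun x y => \sum_j c j * X j x y.

Definition scaleop (I : finType) (k : C) (X : op R I) : op R I :=
  fun x y => k * X x y.

Definition btens n m (F : 'I_n -> op R 'I_m) : op R (idx n m) :=
  fun x y => \prod_i F i (x i) (y i).

Lemma ger0_ReE (z : C) : 0 <= z -> ((complex.Re z)%:C)%C = z.
Proof. by move=> z0; apply: RRe_real; exact: ger0_real. Qed.

Lemma innerNE (I : finType) (X Y : op R I) :
  innerN X Y = (#|I|%:R)^-1 * \sum_i \sum_k (X k i)^* * Y k i.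
Proof. by []. Qed.

Lemma innerN_normE (I : finType) (X : op R I) :
  innerN X X = (#|I|%:R)^-1 * \sum_i \sum_k `|X k i| ^+ 2.
Proof.
rewrite innerNE; congr (_ * _); apply: eq_bigr => i _; apply: eq_bigr => k _.
by rewrite normCK mulrC.
Qed.

Lemma innerN_ge0 (I : finType) (X : op R I) : 0 <= innerN X X.
Proof.
rewrite innerN_normE mulr_ge0 ?invr_ge0 ?ler0n //.
by apply: sumr_ge0 => i _; apply: sumr_ge0 => k _; exact: exprn_ge0.
Qed.

Lemma normC_innerN_le (I : finType) (X Y : op R I) :
  `|innerN X Y| ^+ 2 <= innerN X X * innerN Y Y.
Proof.
have N0 : 0 <= (#|I|%:R : C)^-1 by rewrite invr_ge0 ler0n.
rewrite !innerN_normE innerNE normrM ger0_norm // exprMn [X in _ <= X]mulrACA -expr2.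
rewrite ler_wpM2l ?exprn_ge0 // !pair_big /=.
exact: (cauchy_schwarz_sum (fun p : I * I => X p.2 p.1) (fun p => Y p.2 p.1)).
Qed.

Lemma innerN_lincomb (I J K : finType) (a : J -> C) (b : K -> C)
    (X : J -> op R I) (Y : K -> op R I) :
  innerN (lincomb a X) (lincomb b Y) =
  \sum_j \sum_k (a j)^* * b k * innerN (X j) (Y k).
Proof.
have sum_swap22 (F : J -> K -> I -> I -> C) :
    \sum_j \sum_k \sum_i \sum_l F j k i l = \sum_i \sum_l \sum_j \sum_k F j k i l.
  under eq_bigr do rewrite exchange_big.
  under eq_bigr do under eq_bigr do rewrite exchange_big.
  by rewrite exchange_big; apply: eq_bigr => i _; rewrite exchange_big.
symmetry; transitivity ((#|I|%:R)^-1 * \sum_j \sum_k \sum_i \sum_l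
                         (a j)^* * b k * ((X j l i)^* * Y k l i)).
  rewrite mulr_sumr; apply: eq_bigr => j _; rewrite mulr_sumr; apply: eq_bigr => k _.
  rewrite innerNE mulrCA; congr (_ * _); rewrite !mulr_sumr.
  by apply: eq_bigr => i _; rewrite mulr_sumr.
rewrite innerNE sum_swap22; congr (_ * _); apply: eq_bigr => i _; apply: eq_bigr => l _.
rewrite /lincomb rmorph_sum /= mulr_suml; apply: eq_bigr => j _.
by rewrite rmorphM /= mulr_sumr; apply: eq_bigr => k _; ring.
Qed.

Lemma innerN_orthonormal_lincomb (I J : finType) (X : J -> op R I) (a b : J -> C) :
  (forall j k, innerN (X j) (X k) = (j == k)%:R) ->
  innerN (lincomb a X) (lincomb b X) = \sum_j (a j)^* * b j.
Proof.
move=> orthoX; rewrite innerN_lincomb; apply: eq_bigr => j _.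
by under eq_bigr do rewrite orthoX eq_sym; rewrite sum_delta_r.
Qed.

Lemma innerN_scale (I : finType) (k l : C) (X Y : op R I) :
  innerN (scaleop k X) (scaleop l Y) = k^* * l * innerN X Y.
Proof.
rewrite !innerNE mulrCA; congr (_ * _); rewrite !mulr_sumr; apply: eq_bigr => i _.
by rewrite mulr_sumr; apply: eq_bigr => j _; rewrite /scaleop rmorphM /=; ring.
Qed.

Lemma innerN_normalize (I : finType) (X : op R I) (s : R) :
  0 < s -> ((s ^+ 2)%:C)%C = innerN X X ->
  innerN (scaleop (s^-1)%:C%C X) (scaleop (s^-1)%:C%C X) = 1.
Proof.
move=> s_gt0 hs; rewrite innerN_scale geC0_conj ?ler0c ?invr_ge0 ?ltW //.
rewrite -hs -!rmorphM (_ : s^-1 * s^-1 * s ^+ 2 = 1) ?rmorph1 //.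
by field; rewrite gt_eqF.
Qed.

Lemma trace_lincomb (I J : finType) (c : J -> C) (X : J -> op R I) :
  trace (lincomb c X) = \sum_j c j * trace (X j).
Proof. by rewrite /trace exchange_big; apply: eq_bigr => j _; rewrite mulr_sumr. Qed.

Lemma trace_scale (I : finType) (k : C) (X : op R I) :
  trace (scaleop k X) = k * trace X.
Proof. by rewrite /trace mulr_sumr. Qed.

Lemma innerN_idop (I : finType) (X : op R I) :
  innerN (@idop R I) X = (#|I|%:R)^-1 * trace X.
Proof.
rewrite innerNE; congr (_ * _); apply: eq_bigr => i _.
by under eq_bigr do rewrite conjC_nat; rewrite sum_delta_l.
Qed.

Lemma innerN_btens n m (F G : 'I_n -> op R 'I_m) :
  innerN (btens F) (btens G) = \prod_i innerN (F i) (G i).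
Proof.
rewrite innerNE.
have -> : (#|idx n m|%:R : C)^-1 = \prod_(i < n) (m%:R)^-1.
  by rewrite card_ffun !card_ord natrX prodr_const card_ord exprVn.
under [RHS]eq_bigr do rewrite innerNE card_ord.
rewrite big_split /=; congr (_ * _).
rewrite bigA_distr_bigA; apply: eq_bigr => x _; rewrite bigA_distr_bigA.
by apply: eq_bigr => k _; rewrite /btens rmorph_prod -big_split.
Qed.

Lemma norm2_le (I J : finType) (X : op R I) (Y : op R J) (r : R) :
  0 <= r -> innerN X X <= ((r ^+ 2)%:C)%C * innerN Y Y -> norm2 X <= r * norm2 Y.
Proof.
move=> r0; rewrite /norm2 -(ger0_ReE (innerN_ge0 X)) -(ger0_ReE (innerN_ge0 Y)).
rewrite -rmorphM lecR /= => /ler_wsqrtr; rewrite sqrtrM ?exprn_ge0 //.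
by rewrite sqrtr_sqr ger0_norm.
Qed.

End Operators.

Section MarkovSite.
Variables (R : realType) (mA mB : nat) (psi : op R ('I_mA * 'I_mB)%type).
Hypotheses (mA_gt0 : (0 < mA)%N) (mB_gt0 : (0 < mB)%N).
Hypothesis marginalA_unif : forall a a', marginalA psi a a' = (a == a')%:R / mA%:R.
Hypothesis marginalB_unif : forall b b', marginalB psi b b' = (b == b')%:R / mB%:R.
Local Notation C := R[i].

(* The one-site map t; [trace_markov_site] is the case n = 1 of [markov_op]. *)
Definition markov_site (V : op R 'I_mB) : op R 'I_mA :=
  fun a1 a2 => mA%:R * \sum_b1 \sum_b2 V b2 b1 * psi (a1, b1) (a2, b2).

Lemma trace_markov_site (P : op R 'I_mA) (V : op R 'I_mB) :
  trace (mulop (tens (adj P) V) psi) = innerN P (markov_site V).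
Proof.
rewrite innerNE /trace /mulop /tens /adj /markov_site sum_pair.
under eq_bigr do under eq_bigr do rewrite sum_pair.
rewrite card_ord mulr_sumr; apply: eq_bigr => a2 _.
rewrite exchange_big mulr_sumr; apply: eq_bigr => a1 _.
rewrite mulrCA mulKf ?pnatr_eq0 -?lt0n // mulr_sumr.
rewrite exchange_big; apply: eq_bigr => b1 _; rewrite mulr_sumr.
by apply: eq_bigr => b2 _ /=; ring.
Qed.

Lemma markov_site_lincomb (J : finType) (c : J -> C) (X : J -> op R 'I_mB) :
  markov_site (lincomb c X) = lincomb c (fun j => markov_site (X j)).
Proof.
apply: boolp.funext => a1; apply: boolp.funext => a2.
rewrite /markov_site /lincomb /=.
under [RHS]eq_bigr do rewrite mulrCA.
rewrite -mulr_sumr; congr (_ * _).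
under [RHS]eq_bigr do rewrite mulr_sumr.
rewrite [RHS]exchange_big; apply: eq_bigr => b1 _.
under [RHS]eq_bigr do rewrite mulr_sumr.
rewrite [RHS]exchange_big; apply: eq_bigr => b2 _.
by rewrite mulr_suml; apply: eq_bigr => j _; rewrite mulrA.
Qed.

Lemma markov_site_scale (k : C) (V : op R 'I_mB) :
  markov_site (scaleop k V) = scaleop k (markov_site V).
Proof.
apply: boolp.funext => a1; apply: boolp.funext => a2.
rewrite /markov_site /scaleop mulrCA; congr (_ * _).
rewrite mulr_sumr; apply: eq_bigr => b1 _.
by rewrite mulr_sumr; apply: eq_bigr => b2 _; rewrite mulrA.
Qed.

Lemma markov_site_idop : markov_site (@idop R 'I_mB) = @idop R 'I_mA.
Proof.
apply: boolp.funext => a1; apply: boolp.funext => a2.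
rewrite /markov_site /idop.
under eq_bigr => b1 _ do rewrite sum_delta_l.
have := marginalA_unif a1 a2; rewrite /marginalA => ->.
by rewrite mulrCA mulfV ?pnatr_eq0 -?lt0n // mulr1.
Qed.

Lemma trace_markov_site_eq0 (V : op R 'I_mB) :
  trace V = 0 -> trace (markov_site V) = 0.
Proof.
move=> trV; rewrite /trace /markov_site -mulr_sumr.
transitivity (mA%:R * \sum_b1 \sum_b2 V b2 b1 * marginalB psi b1 b2).
  congr (_ * _); rewrite exchange_big; apply: eq_bigr => b1 _.
  by rewrite exchange_big; apply: eq_bigr => b2 _; rewrite /marginalB mulr_sumr.
under eq_bigr => b1 _ do under eq_bigr => b2 _ do rewrite marginalB_unif [b1 == b2]eq_sym mulrCA.
under eq_bigr => b1 _ do rewrite sum_delta_l.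
by rewrite -mulr_suml -/(trace V) trV mul0r mulr0.
Qed.

Lemma markov_site_bounded :
  exists k : R, forall V : op R 'I_mB,
    innerN (markov_site V) (markov_site V) <= (k%:C)%C * innerN V V.
Proof.
pose S a1 a2 := \sum_b1 \sum_b2 `|psi (a1, b1) (a2, b2)| ^+ 2.
pose kappa : C := mA%:R * mB%:R * \sum_a2 \sum_a1 S a1 a2.
have kappa0 : 0 <= kappa.
  rewrite !mulr_ge0 ?ler0n //; do 4!(apply: sumr_ge0 => ? _); exact: exprn_ge0.
exists (complex.Re kappa) => V; rewrite ger0_ReE //.
(* Cauchy-Schwarz on each entry of [markov_site V] *)
have entry_le a1 a2 : `|markov_site V a1 a2| ^+ 2 <=
    mA%:R ^+ 2 * (mB%:R * innerN V V) * S a1 a2.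
  rewrite /markov_site normrM exprMn normr_nat -mulrA ler_wpM2l ?exprn_ge0 ?ler0n //.
  have -> : mB%:R * innerN V V = \sum_b1 \sum_b2 `|(V b2 b1)^*| ^+ 2.
    rewrite innerN_normE card_ord mulVKf ?pnatr_eq0 -?lt0n //.
    by apply: eq_bigr => b1 _; apply: eq_bigr => b2 _; rewrite norm_conjC.
  rewrite /S !pair_bigA /=.
  under eq_bigr => p _ do rewrite -[V p.2 p.1]conjCK.
  exact: (cauchy_schwarz_sum (fun p : 'I_mB * 'I_mB => (V p.2 p.1)^*)
                             (fun p => psi (a1, p.1) (a2, p.2))).
rewrite innerN_normE card_ord.
apply: (@le_trans _ _ (mA%:R^-1 *
    \sum_a2 \sum_a1 mA%:R ^+ 2 * (mB%:R * innerN V V) * S a1 a2)).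
  rewrite ler_wpM2l ?invr_ge0 ?ler0n //.
  by do 2!(apply: ler_sum => ? _); exact: entry_le.
under eq_bigr do rewrite -mulr_sumr.
rewrite -mulr_sumr le_eqVlt; apply/orP; left; apply/eqP.
by rewrite /kappa; field; rewrite pnatr_eq0 -lt0n.
Qed.

Lemma corr_values_le_maxcorr (r : R) : corr_values psi r -> r <= maxcorr psi.
Proof.
move=> hr; apply: sup_upper_bound => //; split; first by exists r.
have [k hk] := markov_site_bounded.
exists (1 + k) => _ [P [V [_ _ hP hV ->]]].
rewrite trace_markov_site; set z := innerN P (markov_site V).
have : `|z| ^+ 2 <= (k%:C)%C.
  apply: le_trans (normC_innerN_le _ _) _.
  by rewrite hP mul1r -[X in _ <= X]mulr1 -hV hk.
rewrite -(ger0_ReE (normr_ge0 z)) -rmorphXn lecR.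
set u := complex.Re _ => u2_le; nra.
Qed.

Lemma maxcorr_ge0 : 0 <= maxcorr psi.
Proof.
have [[r hr]|none] := boolp.pselect (exists r, corr_values psi r).
  apply: le_trans (corr_values_le_maxcorr hr); case: hr => P [V [_ _ _ _ ->]].
  by have := normr_ge0 (trace (mulop (tens (adj P) V) psi)); rewrite lecE => /andP[].
by rewrite /maxcorr (_ : corr_values psi = set0) ?sup0 //; apply/nonemptyPn.
Qed.

Lemma corr_values_normalized (P : op R 'I_mA) (V : op R 'I_mB) (sP sV : R) :
  trace P = 0 -> trace V = 0 -> 0 < sP -> 0 < sV ->
  ((sP ^+ 2)%:C)%C = innerN P P -> ((sV ^+ 2)%:C)%C = innerN V V ->
  corr_values psi (complex.Re `|innerN P (markov_site V)| / (sP * sV)).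
Proof.
move=> trP trV sP_gt0 sV_gt0 hsP hsV.
exists (scaleop (sP^-1)%:C%C P), (scaleop (sV^-1)%:C%C V); split.
- by rewrite trace_scale trP mulr0.
- by rewrite trace_scale trV mulr0.
- exact: innerN_normalize.
- exact: innerN_normalize.
rewrite trace_markov_site markov_site_scale innerN_scale.
rewrite geC0_conj ?ler0c ?invr_ge0 ?ltW // -rmorphM [in RHS]normrM.
rewrite [in RHS]ger0_norm ?ler0c ?mulr_ge0 ?invr_ge0 ?ltW //.
rewrite -[`|innerN P _|](ger0_ReE (normr_ge0 _)) -rmorphM /=.
by rewrite mulrC invfM.
Qed.

Lemma normC_corr_le (P : op R 'I_mA) (V : op R 'I_mB) :
  trace P = 0 -> trace V = 0 ->
  `|innerN P (markov_site V)| ^+ 2 <=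
  ((maxcorr psi ^+ 2)%:C)%C * innerN P P * innerN V V.
Proof.
move=> trP trV; have [k hk] := markov_site_bounded.
have ReP := ger0_ReE (innerN_ge0 P); have ReV := ger0_ReE (innerN_ge0 V).
set a := complex.Re (innerN P P) in ReP; set b := complex.Re (innerN V V) in ReV.
have a0 : 0 <= a by rewrite -ler0c ReP innerN_ge0.
have b0 : 0 <= b by rewrite -ler0c ReV innerN_ge0.
have z2 : `|innerN P (markov_site V)| ^+ 2 <= (a * (k * b))%:C%C.
  apply: le_trans (normC_innerN_le _ _) _.
  by rewrite !rmorphM /= ReP ReV ler_wpM2l ?innerN_ge0.
rewrite -ReP -ReV -(ger0_ReE (normr_ge0 _)) -!rmorphXn -!rmorphM lecR /=.
rewrite -(ger0_ReE (normr_ge0 _)) -rmorphXn lecR in z2.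
set u := complex.Re _ in z2 *.
have [ab0|ab_neq0] := eqVneq (a * b) 0.
  by rewrite mulrCA ab0 mulr0 in z2; rewrite -mulrA ab0 mulr0.
have a_gt0 : 0 < a by rewrite lt_def a0 andbT; apply: contraNneq ab_neq0 => ->; rewrite mul0r.
have b_gt0 : 0 < b by rewrite lt_def b0 andbT; apply: contraNneq ab_neq0 => ->; rewrite mulr0.
have sa_gt0 : 0 < Num.sqrt a by rewrite sqrtr_gt0.
have sb_gt0 : 0 < Num.sqrt b by rewrite sqrtr_gt0.
have sqa : ((Num.sqrt a ^+ 2)%:C)%C = innerN P P by rewrite sqr_sqrtr.
have sqb : ((Num.sqrt b ^+ 2)%:C)%C = innerN V V by rewrite sqr_sqrtr.
have := corr_values_le_maxcorr (corr_values_normalized trP trV sa_gt0 sb_gt0 sqa sqb).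
rewrite -/u ler_pdivrMr ?mulr_gt0 // => u_le.
have u0 : 0 <= u by rewrite -ler0c ger0_ReE // normr_ge0.
rewrite (_ : _ * a * b = (maxcorr psi * (Num.sqrt a * Num.sqrt b)) ^+ 2); last first.
  by rewrite !exprMn !sqr_sqrtr // mulrA.
by rewrite ler_sqr ?nnegrE // !mulr_ge0 ?maxcorr_ge0 ?sqrtr_ge0.
Qed.

Lemma markov_site_contract (V : op R 'I_mB) :
  trace V = 0 ->
  innerN (markov_site V) (markov_site V) <= ((maxcorr psi ^+ 2)%:C)%C * innerN V V.
Proof.
move=> trV; set x := innerN (markov_site V) _.
have x0 : 0 <= x := innerN_ge0 _.
apply: le_of_mul_le_mul => //.
  by rewrite mulr_ge0 ?ler0c ?exprn_ge0 ?maxcorr_ge0 ?innerN_ge0.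
have := normC_corr_le (trace_markov_site_eq0 trV) trV.
by rewrite -/x ger0_norm // mulrAC [_ * x]mulrC.
Qed.

End MarkovSite.

Section GramKernel.
Variables (R : realType) (mA mB : nat) (psi : op R ('I_mA * 'I_mB)%type).
Hypotheses (mA_gt0 : (0 < mA)%N) (mB_gt0 : (0 < mB)%N).
Hypothesis marginalA_unif : forall a a', marginalA psi a a' = (a == a')%:R / mA%:R.
Hypothesis marginalB_unif : forall b b', marginalB psi b b' = (b == b')%:R / mB%:R.
Variable Bs : 'I_(mB * mB) -> op R 'I_mB.
Hypothesis Bs_std : std_basis Bs.
Local Notation C := R[i].
Local Notation markov_site := (markov_site psi).

Lemma std_basis_orthonormal s t : innerN (Bs s) (Bs t) = (s == t)%:R.
Proof. by case: Bs_std. Qed.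

Lemma trace_std_basis s : val s != 0%N -> trace (Bs s) = 0.
Proof.
move=> s_neq0; pose s0 : 'I_(mB * mB) := Ordinal (leq_ltn_trans (leq0n s) (ltn_ord s)).
case: Bs_std => Bs0 _ _.
have := std_basis_orthonormal s0 s; rewrite Bs0 // innerN_idop card_ord.
have -> : (s0 == s) = false by apply: contraNF s_neq0 => /eqP <-.
by move/eqP; rewrite mulf_eq0 invr_eq0 pnatr_eq0 eqn0Ngt mB_gt0 => /eqP.
Qed.

Lemma trace_lincomb_std_basis (c : 'I_(mB * mB) -> C) :
  (forall s, val s = 0%N -> c s = 0) -> trace (lincomb c Bs) = 0.
Proof.
move=> c0; rewrite trace_lincomb big1 // => s _.
by have [/c0 ->|/trace_std_basis ->] := eqVneq (val s) 0%N; rewrite ?mul0r ?mulr0.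
Qed.

Definition gram s t := innerN (markov_site (Bs s)) (markov_site (Bs t)).

Lemma gram00 s t : val s = 0%N -> val t = 0%N -> gram s t = 1.
Proof.
move=> hs ht; case: Bs_std => Bs0 _ _.
rewrite /gram (Bs0 s hs) (Bs0 t ht) markov_site_idop // innerN_idop /trace /idop.
under eq_bigr do rewrite eqxx.
by rewrite sumr_const card_ord mulVf // pnatr_eq0 -lt0n.
Qed.

Lemma markov_site_lincomb_contract (c : 'I_(mB * mB) -> C) :
  (forall s, val s = 0%N -> c s = 0) ->
  innerN (markov_site (lincomb c Bs)) (markov_site (lincomb c Bs)) <=
  ((maxcorr psi ^+ 2)%:C)%C * \sum_s `|c s| ^+ 2.
Proof.
move=> c0; have := trace_lincomb_std_basis c0.
move/(markov_site_contract mA_gt0 mB_gt0 marginalB_unif)/le_trans; apply.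
rewrite innerN_orthonormal_lincomb; last exact: std_basis_orthonormal.
by under eq_bigr do rewrite mulrC -normCK.
Qed.

Lemma gram_kernel_norm_le (v : 'I_(mB * mB) -> C) :
  \sum_s `|\sum_t ((val s != 0%N) && (val t != 0%N))%:R * gram s t * v t| ^+ 2
    <= ((maxcorr psi ^+ 4)%:C)%C * \sum_s `|v s| ^+ 2.
Proof.
pose w s := \sum_t ((val s != 0%N) && (val t != 0%N))%:R * gram s t * v t.
pose G := \sum_s `|w s| ^+ 2; change (G <= ((maxcorr psi ^+ 4)%:C)%C * \sum_s `|v s| ^+ 2).
pose v' s := (val s != 0%N)%:R * v s.
have w0 s : val s = 0%N -> w s = 0.
  by move=> hs; rewrite /w big1 // => t _; rewrite hs eqxx /= !mul0r.
have v'0 s : val s = 0%N -> v' s = 0 by move=> hs; rewrite /v' hs eqxx mul0r.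
have G0 : 0 <= G by apply: sumr_ge0 => s _; exact: exprn_ge0.
have v'_le : \sum_s `|v' s| ^+ 2 <= \sum_s `|v s| ^+ 2.
  apply: ler_sum => s _; rewrite /v'.
  by case: (val s != 0%N); rewrite ?mul1r ?mul0r ?normr0 ?expr0n ?exprn_ge0.
have G_inner : G = innerN (markov_site (lincomb w Bs)) (markov_site (lincomb v' Bs)).
  rewrite !markov_site_lincomb innerN_lincomb; apply: eq_bigr => s _.
  rewrite normCK mulrC {2}/w mulr_sumr; apply: eq_bigr => t _.
  have [hs|hs] := eqVneq (val s) 0%N; first by rewrite w0 // conjC0 !mul0r.
  by rewrite /v' /gram /=; ring.
apply: le_of_mul_le_mul => //.
  by rewrite mulr_ge0 ?ler0c ?exprn_ge0 ?maxcorr_ge0 // sumr_ge0 // => s _; exact: exprn_ge0.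
have := normC_innerN_le (markov_site (lincomb w Bs)) (markov_site (lincomb v' Bs)).
rewrite -G_inner ger0_norm // expr2 => /le_trans; apply.
apply: le_trans (ler_pM (innerN_ge0 _) (innerN_ge0 _)
  (markov_site_lincomb_contract w0) (markov_site_lincomb_contract v'0)) _.
rewrite mulrACA -rmorphM -exprD mulrCA ler_wpM2l //.
by rewrite ler_wpM2l // ler0c exprn_ge0 // maxcorr_ge0.
Qed.

End GramKernel.

Section MarkovOperator.
Variables (R : realType) (n mA mB : nat) (psi : op R ('I_mA * 'I_mB)%type).
Variable T : op R (idx n mB) -> op R (idx n mA).
Hypotheses (T_markov : markov_op psi T) (mA_gt0 : (0 < mA)%N).
Local Notation C := R[i].

Lemma markov_opE (Q : op R (idx n mB)) x1 x2 :
  T Q x1 x2 = #|idx n mA|%:R * \sum_(y1 : idx n mB) \sum_(y2 : idx n mB)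
                                   Q y2 y1 * tenspow psi (x1, y1) (x2, y2).
Proof.
(* test the defining identity of [T] against the matrix unit [M = E_(x1, x2)] *)
pose M : op R (idx n mA) := fun k i => (k == x1)%:R * (i == x2)%:R.
have MJ k i : (M k i)^* = M k i by rewrite /M rmorphM /= !conjC_nat.
have := T_markov M Q; rewrite innerNE.
under [in RHS]eq_bigr do under eq_bigr do rewrite MJ /M -mulrA.
under [in RHS]eq_bigr do rewrite sum_delta_l.
rewrite sum_delta_l => trMQ.
have N_neq0 : (#|idx n mA|%:R : C) != 0.
  by rewrite pnatr_eq0 -lt0n card_ffun card_ord expn_gt0 card_ord mA_gt0.
rewrite (_ : T Q x1 x2 = #|idx n mA|%:R * trace (mulop (tens (adj M) Q) (tenspow psi))).
  2: by rewrite trMQ mulrA mulfV // mul1r.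
congr (_ * _); rewrite /trace /mulop /tens /adj sum_pair.
under eq_bigr do under eq_bigr do rewrite sum_pair.
transitivity (\sum_(r1 : idx n mA) (r1 == x2)%:R * \sum_(k1 : idx n mA) (k1 == x1)%:R *
   \sum_(r2 : idx n mB) \sum_(k2 : idx n mB) Q r2 k2 * tenspow psi (k1, k2) (r1, r2)).
  apply: eq_bigr => r1 _; rewrite exchange_big mulr_sumr; apply: eq_bigr => k1 _.
  rewrite mulrA mulr_sumr; apply: eq_bigr => r2 _; rewrite mulr_sumr.
  by apply: eq_bigr => k2 _; rewrite MJ /M /=; ring.
by rewrite !sum_delta_l exchange_big.
Qed.

Lemma markov_op_lincomb (J : finType) (c : J -> C) (X : J -> op R (idx n mB)) :
  T (lincomb c X) = lincomb c (fun j => T (X j)).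
Proof.
apply: boolp.funext => x1; apply: boolp.funext => x2.
rewrite /lincomb markov_opE; under [RHS]eq_bigr do rewrite markov_opE mulrCA.
rewrite -mulr_sumr; congr (_ * _).
under [RHS]eq_bigr do rewrite mulr_sumr.
rewrite [RHS]exchange_big; apply: eq_bigr => y1 _.
under [RHS]eq_bigr do rewrite mulr_sumr.
rewrite [RHS]exchange_big; apply: eq_bigr => y2 _.
by rewrite mulr_suml; apply: eq_bigr => j _; rewrite mulrA.
Qed.

Lemma markov_op_btens (F : 'I_n -> op R 'I_mB) :
  T (btens F) = btens (fun i => markov_site psi (F i)).
Proof.
apply: boolp.funext => x1; apply: boolp.funext => x2.
rewrite markov_opE /btens /markov_site.
have -> : (#|idx n mA|%:R : C) = \prod_(i < n) mA%:R.
  by rewrite card_ffun !card_ord natrX prodr_const card_ord.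
rewrite big_split /=; congr (_ * _).
rewrite bigA_distr_bigA; apply: eq_bigr => y1 _; rewrite bigA_distr_bigA.
by apply: eq_bigr => y2 _; rewrite /tenspow -big_split.
Qed.

End MarkovOperator.

Section EfronStein.
Variables (R : realType) (n mA mB : nat) (psi : op R ('I_mA * 'I_mB)%type).
Hypotheses (mA_gt0 : (0 < mA)%N) (mB_gt0 : (0 < mB)%N).
Hypothesis marginalA_unif : forall a a', marginalA psi a a' = (a == a')%:R / mA%:R.
Hypothesis marginalB_unif : forall b b', marginalB psi b b' = (b == b')%:R / mB%:R.
Variable T : op R (idx n mB) -> op R (idx n mA).
Hypothesis T_markov : markov_op psi T.
Variable Bs : 'I_(mB * mB) -> op R 'I_mB.
Hypothesis Bs_std : std_basis Bs.
Variables (Q : op R (idx n mB)) (S : {set 'I_n}).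
Local Notation C := R[i].
Local Notation multi_index := {ffun 'I_n -> 'I_(mB * mB)}.

Definition supp (sg : multi_index) : {set 'I_n} := [set i | val (sg i) != 0%N].

Definition es_coef (sg : multi_index) : C :=
  (supp sg == S)%:R * innerN (basis_tens Bs sg) Q.

Lemma es_coef_eq0 sg : supp sg != S -> es_coef sg = 0.
Proof. by rewrite /es_coef => /negbTE ->; rewrite mul0r. Qed.

Lemma es_compE : es_comp Bs Q S = lincomb es_coef (basis_tens Bs).
Proof.
apply: boolp.funext => x; apply: boolp.funext => y.
rewrite /es_comp big_mkcond; apply: eq_bigr => sg _.
by rewrite /es_coef /supp; case: eqP; rewrite ?mul1r ?mul0r.
Qed.

Lemma basis_tens_orthonormal (sg tau : multi_index) :
  innerN (basis_tens Bs sg) (basis_tens Bs tau) = (sg == tau)%:R.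
Proof.
rewrite (innerN_btens (fun i => Bs (sg i)) (fun i => Bs (tau i))).
under eq_bigr do rewrite std_basis_orthonormal //.
have [<-|sg_neq_tau] := eqVneq sg tau; first by rewrite big1 // => i _; rewrite eqxx.
have [i sg_tau_i] : exists i, sg i != tau i.
  apply/existsP; apply: contraNT sg_neq_tau => /existsPn sg_eq_tau.
  by apply/eqP/ffunP => i; apply/eqP; have := sg_eq_tau i; rewrite negbK.
by rewrite (bigD1 i) //= (negbTE sg_tau_i) mul0r.
Qed.

Definition es_kernel (i : 'I_n) (s t : 'I_(mB * mB)) : C :=
  if i \in S then ((val s != 0%N) && (val t != 0%N))%:R * gram psi Bs s t
  else ((val s == 0%N) && (val t == 0%N))%:R.

Lemma es_kernel_norm_le i (v : 'I_(mB * mB) -> C) :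
  \sum_s `|\sum_t es_kernel i s t * v t| ^+ 2 <=
  (if i \in S then ((maxcorr psi ^+ 4)%:C)%C else 1) * \sum_s `|v s| ^+ 2.
Proof.
rewrite /es_kernel; case: ifP => _; first exact: gram_kernel_norm_le.
have s0_lt : (0 < mB * mB)%N by rewrite muln_gt0 mB_gt0.
pose s0 : 'I_(mB * mB) := Ordinal s0_lt.
have val_eq0 s : (val s == 0%N) = (s == s0) by apply/eqP/eqP => [h|->//]; apply: val_inj.
under eq_bigr => s _ do under eq_bigr => t _ do
  rewrite !val_eq0 -mulnb natrM -mulrA.
under eq_bigr => s _ do rewrite -mulr_sumr sum_delta_l.
rewrite mul1r [X in X <= _](bigD1 s0) //= ?eqxx mul1r big1 ?addr0; last first.
  by move=> s /negbTE ->; rewrite mul0r normr0 expr0n.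
rewrite [X in _ <= X](bigD1 s0) //= lerDl.
by apply: sumr_ge0 => s _; exact: exprn_ge0.
Qed.

Lemma prod_gram_es_kernel (sg tau : multi_index) : supp sg = S -> supp tau = S ->
  \prod_i gram psi Bs (sg i) (tau i) = \prod_i es_kernel i (sg i) (tau i).
Proof.
move=> sgS tauS; apply: eq_bigr => i _.
have sg_iS : (i \in S) = (val (sg i) != 0%N) by rewrite -sgS inE.
have tau_iS : (i \in S) = (val (tau i) != 0%N) by rewrite -tauS inE.
rewrite /es_kernel -sg_iS -tau_iS; case: ifP => iS; first by rewrite iS mul1r.
move: sg_iS tau_iS; rewrite iS => /esym/negbFE/eqP sg0 /esym/negbFE/eqP tau0.
by rewrite sg0 tau0 eqxx gram00.
Qed.

Lemma innerN_markov_es_comp :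
  innerN (T (es_comp Bs Q S)) (T (es_comp Bs Q S)) =
  \sum_sg (es_coef sg)^* *
    \sum_(tau : multi_index) (\prod_i es_kernel i (sg i) (tau i)) * es_coef tau.
Proof.
rewrite es_compE (markov_op_lincomb T_markov mA_gt0) innerN_lincomb.
apply: eq_bigr => sg _; rewrite mulr_sumr; apply: eq_bigr => tau _.
rewrite /= (markov_op_btens T_markov mA_gt0 (fun i => Bs (sg i))).
rewrite (markov_op_btens T_markov mA_gt0 (fun i => Bs (tau i))) innerN_btens.
have [sgS|/es_coef_eq0 ->] := eqVneq (supp sg) S; last by rewrite conjC0 !mul0r.
have [tauS|/es_coef_eq0 ->] := eqVneq (supp tau) S; last by rewrite !(mulr0, mul0r).
by rewrite (prod_gram_es_kernel sgS tauS) -mulrA [es_coef tau * _]mulrC.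
Qed.

End EfronStein.

Unset Implicit Arguments.

Theorem proposition3p13 (R : realType) (n mA mB : nat)
  (hn : (0 < n)%N) (hmA : (0 < mA)%N) (hmB : (0 < mB)%N)
  (psi : op R ('I_mA * 'I_mB)%type)
  (hpsi : density psi)
  (hA : forall a a' : 'I_mA, marginalA psi a a' = (a == a')%:R / mA%:R)
  (hB : forall b b' : 'I_mB, marginalB psi b b' = (b == b')%:R / mB%:R)
  (T : op R (idx n mB) -> op R (idx n mA))
  (hT : markov_op psi T)
  (Bs : 'I_(mB * mB) -> op R 'I_mB)
  (hBs : std_basis Bs)
  (Q : op R (idx n mB)) (S : {set 'I_n}) :
  norm2 (T (es_comp Bs Q S)) <= maxcorr psi ^+ #|S| * norm2 (es_comp Bs Q S).
Proof.
have rho_ge0 := maxcorr_ge0 psi hmA hmB.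
pose lam i : R[i] := if i \in S then ((maxcorr psi ^+ 4)%:C)%C else 1.
have lam_ge0 i : 0 <= lam i by rewrite /lam; case: ifP; rewrite ?ler01 // ler0c exprn_ge0.
have := tensor_kernel_norm_le lam_ge0 (es_kernel_norm_le hmA hmB hB hBs S) (es_coef Bs Q S).
rewrite /lam -big_mkcond /= prodr_const -rmorphXn -exprM => kernel_le.
apply: norm2_le; first exact: exprn_ge0.
rewrite (innerN_markov_es_comp hmA hA hT hBs) es_compE innerN_orthonormal_lincomb; last first.
  exact: basis_tens_orthonormal.
under [X in _ <= _ * X]eq_bigr do rewrite mulrC -normCK.
apply: sum_conjM_le; first by rewrite ler0c exprn_ge0 // exprn_ge0.
  by rewrite -(innerN_markov_es_comp hmA hA hT hBs); exact: innerN_ge0.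
suff -> : ((maxcorr psi ^+ #|S| ^+ 2)%:C)%C ^+ 2 = ((maxcorr psi ^+ (4 * #|S|))%:C)%C.
  by [].
by rewrite -rmorphXn -!exprM -mulnA mulnC.
Qed.
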